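(* Let $i:B\to A$ be a $k$-linear $X$-functor from a diagonal $k$-linear category $B$ to a $k$-linear category $A$. Let $x,y\in X$ and assume that $A_{xy}$ is flat as a left $B_x$-module. Then for every descent datum $(M,\sigma)\in\underline{\rm Desc}_B(A)$ the map $\varepsilon^M_{xy}:G(M)_x\otimes_{B_x}A_{xy}\to M_{xy}$, $m\otimes_{B_x}a\mapsto ma$, is bijective, where $G(M)_x=\{m\in M_{xx}\mid\sigma_{xx}(m)=m\otimes_{B_x}1_x\}$.
   Context: Let $k$ be a commutative ring; unadorned $\otimes$ is over $k$. A $k$-linear category $A$ with class of objects $X$ consists of $k$-modules $A_{xy}$ ($x,y\in X$), associative $k$-bilinear compositions $A_{xy}\otimes A_{yz}\to A_{xz}$, $a\otimes b\mapsto ab$, and units $1_x\in A_{xx}$. A right $A$-module is a family of $k$-modules $(M_{xy})_{x,y\in X}$ with $k$-linear maps $M_{xy}\otimes A_{yz}\to M_{xz}$, $m\otimes a\mapsto ma$, with $(ma)b=m(ab)$, $m1_y=m$. A diagonal $k$-linear category $B$ is a family of $k$-algebras $(B_x)_{x\in X}$ (with $B_{xy}=0$ for $x\neq y$). A $k$-linear $X$-functor $i:B\to A$ amounts to $k$-algebra morphisms $i_x:B_x\to A_{xx}$; then $A_{xy}$ is a left $B_x$-module and right $B_y$-module by multiplication, and $M_{xy}$ is a right $B_y$-module. A descent datum $(M,\sigma)$ for $i$ is a right $A$-module $M$ with $k$-linear maps $\sigma_{xy}:M_{xy}\to M_{xx}\otimes_{B_x}A_{xy}$, $\sigma_{xy}(m)=m_{<0>}\otimes_{B_x}m_{<1>}$,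 such that for all $m\in M_{xy}$, $a\in A_{yz}$: (i) $\sigma_{xz}(ma)=m_{<0>}\otimes_{B_x}m_{<1>}a$; (ii) $\sigma_{xx}(m_{<0>})\otimes_{B_x}m_{<1>}=m_{<0>}\otimes_{B_x}1_x\otimes_{B_x}m_{<1>}$; (iii) $m_{<0>}m_{<1>}=m$. $\underline{\rm Desc}_B(A)$ denotes the category of descent data. *)

From HB Require Import structures.
From mathcomp Require Import all_boot all_order all_algebra.
Set Implicit Arguments. Unset Strict Implicit. Unset Printing Implicit Defensive.
Import GRing.Theory.
Local Open Scope ring_scope.

(* Tensor products over a (possibly noncommutative) ring, presented as       *)
(* formal sums (lists of pairs) modulo the congruence generated by the       *)
(* defining relations of the tensor product.  The ring R only enters through *)
(* the two actions.  The predicate P restricts the admissible left factors: *)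
(* for P a sub-R-module of M, the relation restricted to P-lists presents    *)
(* P (x)_R N (NOT its image in M (x)_R N); for P = fun _ => True one gets    *)
(* M (x)_R N itself.                                                         *)
Section Tensor.
Variables (R : Type) (M N : zmodType) (actM : M -> R -> M) (actN : R -> N -> N)
  (P : M -> Prop).

Inductive teq : seq (M * N) -> seq (M * N) -> Prop :=
| teq_refl s : teq s s
| teq_sym s t : teq s t -> teq t s
| teq_trans s t u : teq s t -> teq t u -> teq s u
| teq_cat s1 t1 s2 t2 : teq s1 t1 -> teq s2 t2 -> teq (s1 ++ s2) (t1 ++ t2)
| teq_swap s t : teq (s ++ t) (t ++ s)
| teq_addl m m' n : P m -> P m' -> P (m + m') ->
    teq [:: (m + m', n)] [:: (m, n); (m', n)]
| teq_addr m n n' : P m -> teq [:: (m, n + n')] [:: (m, n); (m, n')]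
| teq_zerol n : P 0 -> teq [:: (0, n)] [::]
| teq_zeror m : P m -> teq [:: (m, 0)] [::]
| teq_bal m r n : P m -> P (actM m r) ->
    teq [:: (actM m r, n)] [:: (m, actN r n)].
End Tensor.

Section Tensor3.
Variables (R S : Type) (M Q N : zmodType) (actM : M -> R -> M)
  (actQl : R -> Q -> Q) (actQr : Q -> S -> Q) (actN : S -> N -> N).

Inductive teq3 : seq (M * Q * N) -> seq (M * Q * N) -> Prop :=
| teq3_refl s : teq3 s s
| teq3_sym s t : teq3 s t -> teq3 t s
| teq3_trans s t u : teq3 s t -> teq3 t u -> teq3 s u
| teq3_cat s1 t1 s2 t2 : teq3 s1 t1 -> teq3 s2 t2 -> teq3 (s1 ++ s2) (t1 ++ t2)
| teq3_swap s t : teq3 (s ++ t) (t ++ s)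
| teq3_add1 m m' q n : teq3 [:: (m + m', q, n)] [:: (m, q, n); (m', q, n)]
| teq3_add2 m q q' n : teq3 [:: (m, q + q', n)] [:: (m, q, n); (m, q', n)]
| teq3_add3 m q n n' : teq3 [:: (m, q, n + n')] [:: (m, q, n); (m, q, n')]
| teq3_zero1 q n : teq3 [:: (0, q, n)] [::]
| teq3_zero2 m n : teq3 [:: (m, 0, n)] [::]
| teq3_zero3 m q : teq3 [:: (m, q, 0)] [::]
| teq3_bal1 m r q n : teq3 [:: (actM m r, q, n)] [:: (m, actQl r q, n)]
| teq3_bal2 m q s n : teq3 [:: (m, actQr q s, n)] [:: (m, q, actN s n)].
End Tensor3.

Record kalg (k : comPzRingType) := KAlg {
  kcar : lmodType k;
  kmul : kcar -> kcar -> kcar;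
  kone : kcar;
  kmulA : forall a b c, kmul a (kmul b c) = kmul (kmul a b) c;
  kmul1l : forall a, kmul kone a = a;
  kmul1r : forall a, kmul a kone = a;
  kmulDl : forall a a' b, kmul (a + a') b = kmul a b + kmul a' b;
  kmulDr : forall a b b', kmul a (b + b') = kmul a b + kmul a b';
  kmulZl : forall (c : k) a b, kmul (c *: a) b = c *: kmul a b;
  kmulZr : forall (c : k) a b, kmul a (c *: b) = c *: kmul a b }.

Record klincat (k : comPzRingType) (X : Type) := KLinCat {
  khom : X -> X -> lmodType k;
  kcomp : forall x y z, khom x y -> khom y z -> khom x z;
  kidm : forall x, khom x x;
  kcompA : forall x y z w (a : khom x y) (b : khom y z) (c : khom z w),
      kcomp (kcomp a b) c = kcomp a (kcomp b c);
  kcomp1l : forall x y (a : khom x y), kcomp (kidm x) a = a;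
  kcomp1r : forall x y (a : khom x y), kcomp a (kidm y) = a;
  kcompDl : forall x y z (a a' : khom x y) (b : khom y z),
      kcomp (a + a') b = kcomp a b + kcomp a' b;
  kcompDr : forall x y z (a : khom x y) (b b' : khom y z),
      kcomp a (b + b') = kcomp a b + kcomp a b';
  kcompZl : forall x y z (c : k) (a : khom x y) (b : khom y z),
      kcomp (c *: a) b = c *: kcomp a b;
  kcompZr : forall x y z (c : k) (a : khom x y) (b : khom y z),
      kcomp a (c *: b) = c *: kcomp a b }.

(* A k-linear X-functor i : B -> A from the diagonal category B = (B_x)_x:
   k-algebra morphisms i_x : B_x -> A_xx. *)
Definition kfunctor (k : comPzRingType) (X : Type) (B : X -> kalg k)
    (A : klincat k X) (i : forall {x}, kcar (B x) -> khom A x x) : Prop :=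
  forall x,
  [/\ forall b b', @i x (b + b') = @i x b + @i x b',
      forall (c : k) b, @i x (c *: b) = c *: @i x b,
      forall b b', @i x (kmul b b') = kcomp (@i x b) (@i x b') &
      @i x (kone (B x)) = kidm A x].

Definition rAmodule (k : comPzRingType) (X : Type) (A : klincat k X)
    (M : X -> X -> lmodType k)
    (ract : forall {x y z}, M x y -> khom A y z -> M x z) : Prop :=
  (forall x y z (m m' : M x y) (a : khom A y z),
        ract (m + m') a = ract m a + ract m' a) /\
  [/\ forall x y z (m : M x y) (a a' : khom A y z),
        ract m (a + a') = ract m a + ract m a',
      forall x y z (c : k) (m : M x y) (a : khom A y z),
        ract (c *: m) a = c *: ract m a,
      forall x y z (c : k) (m : M x y) (a : khom A y z),
        ract m (c *: a) = c *: ract m a,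
      forall x y z w (m : M x y) (a : khom A y z) (b : khom A z w),
        ract (ract m a) b = ract m (kcomp a b) &
      forall x y (m : M x y), ract m (kidm A y) = m].

Section Desc.
Variables (k : comPzRingType) (X : Type) (B : X -> kalg k) (A : klincat k X)
  (i : forall {x}, kcar (B x) -> khom A x x)
  (M : X -> X -> lmodType k)
  (ract : forall {x y z}, M x y -> khom A y z -> M x z).

Definition ractB x y (m : M x y) (b : kcar (B y)) : M x y := ract m (i b).
Definition lactB x y (b : kcar (B x)) (a : khom A x y) : khom A x y :=
  kcomp (i b) a.

Definition teqMA x y := @teq (kcar (B x)) (M x x) (khom A x y)
  (@ractB x x) (@lactB x y) (fun _ => True).

Definition teqMAA x y := @teq3 (kcar (B x)) (kcar (B x)) (M x x) (khom A x x)
  (khom A x y) (@ractB x x) (@lactB x x)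
  (fun (a : khom A x x) b => kcomp a (i b)) (@lactB x y).

(* sigma_xy(m) = m_<0> (x)_{B_x} m_<1>, given by a representative formal sum *)
Definition descent_datum
    (sigma : forall x y, M x y -> seq (M x x * khom A x y)) : Prop :=
  [/\
      forall x y (m m' : M x y),
        teqMA (sigma x y (m + m')) (sigma x y m ++ sigma x y m'),
      forall x y (c : k) (m : M x y),
        teqMA (sigma x y (c *: m))
              [seq (c *: p.1, p.2) | p <- sigma x y m],
      forall x y z (m : M x y) (a : khom A y z),
        teqMA (sigma x z (ract m a))
              [seq (p.1, kcomp p.2 a) | p <- sigma x y m],
      forall x y (m : M x y),
        teqMAA
          (flatten [seq [seq (q.1, q.2, p.2) | q <- sigma x x p.1]
                   | p <- sigma x y m])
          [seq (p.1, kidm A x, p.2) | p <- sigma x y m] &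
      forall x y (m : M x y), \sum_(p <- sigma x y m) ract p.1 p.2 = m].

Definition GM (sigma : forall x y, M x y -> seq (M x x * khom A x y)) x
    (m : M x x) : Prop :=
  teqMA (sigma x x m) [:: (m, kidm A x)].

Definition teqGA sigma x y := @teq (kcar (B x)) (M x x) (khom A x y)
  (@ractB x x) (@lactB x y) (@GM sigma x).

Definition epsM x y (s : seq (M x x * khom A x y)) : M x y :=
  \sum_(p <- s) ract p.1 p.2.

End Desc.

Definition rmod_over (k : comPzRingType) (B : kalg k) (P : zmodType)
    (a : P -> kcar B -> P) : Prop :=
  [/\ forall p p' b, a (p + p') b = a p b + a p' b,
      forall p b b', a p (b + b') = a p b + a p b',
      forall p b b', a p (kmul b b') = a (a p b) b' &
      forall p, a p (kone B) = p].

(* A left B-module N is flat: - (x)_B N preserves injective maps of right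
   B-modules. *)
Definition flat_left (k : comPzRingType) (B : kalg k) (N : zmodType)
    (actN : kcar B -> N -> N) : Prop :=
  forall (P Q : zmodType) (aP : P -> kcar B -> P) (aQ : Q -> kcar B -> Q)
         (f : P -> Q),
    rmod_over aP -> rmod_over aQ ->
    (forall p p', f (p + p') = f p + f p') ->
    (forall p b, f (aP p b) = aQ (f p) b) ->
    injective f ->
    forall s t : seq (P * N),
      teq aQ actN (fun _ => True) [seq (f q.1, q.2) | q <- s]
                                  [seq (f q.1, q.2) | q <- t] ->
      teq aP actN (fun _ => True) s t.

(* Let Q = M_xx (x)_{B_x} A_xx and d : M_xx -> Q, d m = sigma_xx(m) - m (x) 1_x,
   so that G(M)_x = ker d.  For m in G(M)_x axiom (i) gives
   sigma_xy(m a) = m (x) a, so sigma_xy inverts epsilon on the image of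
   G(M)_x (x) A_xy in M_xx (x) A_xy; as A_xy is flat, G(M)_x (x) A_xy embeds
   in M_xx (x) A_xy, and epsilon is injective.  For surjectivity, axiom (ii)
   says that sum d(m_<0>) (x) m_<1> vanishes in Q (x) A_xy, hence, by flatness
   again, in (im d) (x) A_xy.  Right exactness of - (x) A_xy along
   M_xx ->> im d then writes sigma_xy(m) = sum m_<0> (x) m_<1> as an element of
   G(M)_x (x) A_xy, which epsilon sends to m by axiom (iii). *)

From HB Require Import structures.
From mathcomp Require Import all_boot all_order all_algebra.
From mathcomp Require Import boolp.
Import GRing.Theory.
Local Open Scope ring_scope.

Section AdditiveMaps.
Variables (V W : zmodType) (f : V -> W).
Hypothesis fD : {morph f : a b / a + b}.

Lemma morphD0 : f 0 = 0.
Proof. by apply: (addrI (f 0)); rewrite -fD !addr0. Qed.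

Lemma morphDN : {morph f : a / - a}.
Proof. by move=> a; apply/eqP; rewrite -addr_eq0 -fD addNr morphD0. Qed.

Lemma morphDB : {morph f : a b / a - b}.
Proof. by move=> a b; rewrite fD morphDN. Qed.

End AdditiveMaps.

Arguments morphD0 {V W f}.
Arguments morphDN {V W f}.
Arguments morphDB {V W f}.

Definition mapl {M M' N : Type} (f : M -> M') (s : seq (M * N)) :=
  [seq (f p.1, p.2) | p <- s].
Definition mapr {M N N' : Type} (f : N -> N') (s : seq (M * N)) :=
  [seq (p.1, f p.2) | p <- s].

Section TensorQuotient.
Variables (R : Type) (M N : zmodType) (aM : M -> R -> M) (aN : R -> N -> N).
Local Notation teqT := (teq aM aN (fun _ => True)).

Definition tensor := {c : seq (M * N) -> Prop | exists s, c = teqT s}.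
Definition ten s : tensor := exist _ (teqT s) (ex_intro _ s erefl).
Definition ten_repr (c : tensor) := projT1 (cid (proj2_sig c)).

Lemma ten_eqP s t : ten s = ten t <-> teqT s t.
Proof.
split=> [/(congr1 (@proj1_sig _ _)) /= st | st].
  by rewrite st; apply: teq_refl.
apply: eq_exist; apply: funext => u; apply: propext.
by split; apply: teq_trans; [apply: teq_sym|].
Qed.

Lemma ten_reprK : cancel ten_repr ten.
Proof.
rewrite /ten_repr => -[c hc]; case: (cid _) => s /= e.
by subst c; apply: eq_exist.
Qed.

Lemma ten_repr_teq s : teqT (ten_repr (ten s)) s.
Proof. by apply/ten_eqP; rewrite ten_reprK. Qed.

Lemma teq_oppl_cat s : teqT (mapl -%R s ++ s) [::].
Proof.
elim: s => [|[m n] s IH] /=; first exact: teq_refl.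
apply: (@teq_trans _ _ _ _ _ _ _ ([:: (- m, n); (m, n)] ++ (mapl -%R s ++ s))).
  change (teqT ([:: (- m, n)] ++ (mapl -%R s ++ [:: (m, n)] ++ s))
               ([:: (- m, n)] ++ ([:: (m, n)] ++ mapl -%R s ++ s))).
  apply: teq_cat; first exact: teq_refl.
  by rewrite !catA; apply: teq_cat; [apply: teq_swap | apply: teq_refl].
rewrite -[[::]]/([::] ++ [::]); apply: teq_cat => //.
apply: teq_trans (teq_sym (teq_addl _ _ _ I I I)) _.
by rewrite addNr; apply: teq_zerol.
Qed.

Definition ten_add a b := ten (ten_repr a ++ ten_repr b).
Definition ten_opp a := ten (mapl -%R (ten_repr a)).

Lemma ten_add_ten s t : ten_add (ten s) (ten t) = ten (s ++ t).
Proof. by apply/ten_eqP; apply: teq_cat; apply: ten_repr_teq. Qed.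

Lemma ten_addA : associative ten_add.
Proof.
move=> a b c; rewrite -[a]ten_reprK -[b]ten_reprK -[c]ten_reprK.
by rewrite !ten_add_ten catA.
Qed.

Lemma ten_addC : commutative ten_add.
Proof.
move=> a b; rewrite -[a]ten_reprK -[b]ten_reprK !ten_add_ten.
by apply/ten_eqP; apply: teq_swap.
Qed.

Lemma ten_add0 : left_id (ten [::]) ten_add.
Proof. by move=> a; rewrite -[a]ten_reprK ten_add_ten. Qed.

Lemma ten_addN : left_inverse (ten [::]) ten_opp ten_add.
Proof.
move=> a; rewrite /ten_opp -[a in ten_add _ a]ten_reprK ten_add_ten.
by apply/ten_eqP; apply: teq_oppl_cat.
Qed.

End TensorQuotient.

Arguments tensor {R M N} aM aN.
Arguments ten {R M N} aM aN s : simpl never.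
Arguments ten_repr {R M N aM aN} c.
Arguments ten_eqP {R M N aM aN s t}.

HB.instance Definition _ R M N aM aN := gen_eqMixin (@tensor R M N aM aN).
HB.instance Definition _ R M N aM aN := gen_choiceMixin (@tensor R M N aM aN).
HB.instance Definition _ R M N aM aN :=
  GRing.isZmodule.Build (@tensor R M N aM aN)
    (@ten_addA R M N aM aN) (@ten_addC R M N aM aN) (@ten_add0 R M N aM aN)
    (@ten_addN R M N aM aN).

Section TensorTheory.
Variables (R : Type) (M N : zmodType) (aM : M -> R -> M) (aN : R -> N -> N).
Local Notation ten := (ten aM aN).

Lemma ten_cat s t : ten (s ++ t) = ten s + ten t.
Proof. by rewrite -ten_add_ten. Qed.

Lemma ten_cons p s : ten (p :: s) = ten [:: p] + ten s.
Proof. by rewrite -ten_cat. Qed.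

Lemma ten_sum s : ten s = \sum_(p <- s) ten [:: p].
Proof. by elim: s => [|p s IH]; rewrite ?big_nil // big_cons ten_cons IH. Qed.

Lemma tenDl m m' n : ten [:: (m + m', n)] = ten [:: (m, n)] + ten [:: (m', n)].
Proof. by rewrite -ten_cat; apply/ten_eqP; apply: teq_addl. Qed.

Lemma tenDr m n n' : ten [:: (m, n + n')] = ten [:: (m, n)] + ten [:: (m, n')].
Proof. by rewrite -ten_cat; apply/ten_eqP; apply: teq_addr. Qed.

Lemma ten0l n : ten [:: (0, n)] = 0.
Proof. by apply/ten_eqP; apply: teq_zerol. Qed.

Lemma ten0r m : ten [:: (m, 0)] = 0.
Proof. by apply/ten_eqP; apply: teq_zeror. Qed.

Lemma ten_bal m r n : ten [:: (aM m r, n)] = ten [:: (m, aN r n)].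
Proof. by apply/ten_eqP; apply: teq_bal. Qed.

Lemma tenNl m n : ten [:: (- m, n)] = - ten [:: (m, n)].
Proof. exact: (@morphDN _ _ (fun m => ten [:: (m, n)]) (fun a b => tenDl a b n)). Qed.

Lemma tenBl m m' n : ten [:: (m - m', n)] = ten [:: (m, n)] - ten [:: (m', n)].
Proof. exact: (@morphDB _ _ (fun m => ten [:: (m, n)]) (fun a b => tenDl a b n)). Qed.

Lemma ten_oppl s : ten (mapl -%R s) = - ten s.
Proof.
elim: s => [|[m n] s IH] /=; first by rewrite oppr0.
by rewrite ten_cons IH tenNl [ten (_ :: s)]ten_cons opprD.
Qed.

End TensorTheory.

Lemma teq_predW {R : Type} {M N : zmodType} {aM : M -> R -> M} {aN : R -> N -> N}
    {P P' : M -> Prop} {s t} :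
  (forall m, P m -> P' m) -> teq aM aN P s t -> teq aM aN P' s t.
Proof.
move=> PP'; elim=> {s t}; try by constructor; auto.
by move=> s t u _ st _ tu; apply: teq_trans st tu.
Qed.

Section TensorMapR.
Variables (R : Type) (M N N' : zmodType) (aM : M -> R -> M)
  (aN : R -> N -> N) (aN' : R -> N' -> N') (f : N -> N').
Hypotheses (fD : {morph f : n n' / n + n'})
  (f_act : forall r n, f (aN r n) = aN' r (f n)).

Lemma teq_mapr P s t : teq aM aN P s t -> teq aM aN' P (mapr f s) (mapr f t).
Proof.
elim=> {s t} /=.
- by move=> s; apply: teq_refl.
- by move=> s t _; apply: teq_sym.
- by move=> s t u _ st _; apply: teq_trans st.
- by move=> s1 t1 s2 t2 _ e1 _ e2; rewrite /mapr !map_cat; apply: teq_cat.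
- by move=> s t; rewrite /mapr !map_cat; apply: teq_swap.
- by move=> m m' n Pm Pm' Pmm'; apply: teq_addl.
- by move=> m n n' Pm; rewrite fD; apply: teq_addr.
- by move=> n P0; apply: teq_zerol.
- by move=> m Pm; rewrite (morphD0 fD); apply: teq_zeror.
- by move=> m r n Pm Pmr; rewrite f_act; apply: teq_bal.
Qed.

Definition tensor_mapr (q : tensor aM aN) : tensor aM aN' :=
  ten aM aN' (mapr f (ten_repr q)).

Lemma tensor_maprE s : tensor_mapr (ten aM aN s) = ten aM aN' (mapr f s).
Proof. by apply/ten_eqP; apply: teq_mapr; apply: ten_repr_teq. Qed.

Lemma tensor_maprD : {morph tensor_mapr : q q' / q + q'}.
Proof.
move=> q q'; rewrite -[q]ten_reprK -[q']ten_reprK -ten_cat !tensor_maprE.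
by rewrite /mapr map_cat ten_cat.
Qed.

End TensorMapR.

Arguments tensor_mapr {R M N N' aM aN aN'} f q.
Arguments tensor_maprE {R M N N' aM aN aN' f} fD f_act s.
Arguments tensor_maprD {R M N N' aM aN aN' f} fD f_act.

Section BalancedSum.
Variables (R : Type) (M N V : zmodType) (aM : M -> R -> M) (aN : R -> N -> N)
  (beta : M -> N -> V).
Hypotheses (betaDl : forall n, {morph beta^~ n : m m' / m + m'})
  (betaDr : forall m, {morph beta m : n n' / n + n'})
  (beta_bal : forall m r n, beta (aM m r) n = beta m (aN r n)).

Lemma teq_sum_balanced P s t : teq aM aN P s t ->
  \sum_(p <- s) beta p.1 p.2 = \sum_(p <- t) beta p.1 p.2.
Proof.
elim=> {s t}.
- by [].
- by move=> s t _ ->.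
- by move=> s t u _ -> _ ->.
- by move=> s1 t1 s2 t2 _ e1 _ e2; rewrite !big_cat e1 e2.
- by move=> s t; rewrite !big_cat; apply: addrC.
- by move=> m m' n *; rewrite !big_cons !big_nil /= betaDl !addr0.
- by move=> m n n' _; rewrite !big_cons !big_nil /= betaDr !addr0.
- by move=> n _; rewrite big_cons big_nil /= (morphD0 (betaDl n)) addr0.
- by move=> m _; rewrite big_cons big_nil /= (morphD0 (betaDr m)) addr0.
- by move=> m r n *; rewrite !big_cons !big_nil /= beta_bal.
Qed.

End BalancedSum.

Section TensorAssoc.
Variables (R S : Type) (M Q N : zmodType) (aM : M -> R -> M)
  (aQl : R -> Q -> Q) (aQr : Q -> S -> Q) (aN : S -> N -> N)
  (aMQ : tensor aM aQl -> S -> tensor aM aQl).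
Hypothesis aMQ_ten :
  forall m q s, aMQ (ten aM aQl [:: (m, q)]) s = ten aM aQl [:: (m, aQr q s)].

Definition ten_assoc (u : seq (M * Q * N)) := mapl (fun p => ten aM aQl [:: p]) u.

Lemma teq3_ten_assoc u v : teq3 aM aQl aQr aN u v ->
  ten aMQ aN (ten_assoc u) = ten aMQ aN (ten_assoc v).
Proof.
elim=> {u v}.
- by [].
- by move=> u v _ ->.
- by move=> u v w _ -> _ ->.
- by move=> u1 v1 u2 v2 _ e1 _ e2; rewrite /ten_assoc /mapl !map_cat !ten_cat e1 e2.
- by move=> u v; rewrite /ten_assoc /mapl !map_cat !ten_cat addrC.
- by move=> m m' q n; rewrite /= tenDl tenDl [RHS]ten_cons.
- by move=> m q q' n; rewrite /= tenDr tenDl [RHS]ten_cons.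
- by move=> m q n n'; rewrite /= tenDr [RHS]ten_cons.
- by move=> q n; rewrite /= ten0l ten0l.
- by move=> m n; rewrite /= ten0r ten0l.
- by move=> m q; rewrite /= ten0r.
- by move=> m r q n; rewrite /= ten_bal.
- by move=> m q s n; rewrite /= -aMQ_ten ten_bal.
Qed.

Lemma ten_assoc_pairs (u : seq (M * Q)) n :
  ten aMQ aN [seq (ten aM aQl [:: q], n) | q <- u] = ten aMQ aN [:: (ten aM aQl u, n)].
Proof.
elim: u => [|q u IH] /=; first by rewrite ten0l.
by rewrite [ten aM aQl (q :: u)]ten_cons tenDl -IH -ten_cons.
Qed.

End TensorAssoc.

Arguments ten_assoc {R M Q N aM aQl} u.
Arguments teq3_ten_assoc {R S M Q N aM aQl aQr aN aMQ} aMQ_ten {u v}.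
Arguments ten_assoc_pairs {R S M Q N aM aQl aN aMQ} u n.

Record zmod_pred (V : zmodType) := ZmodPred {
  zpred_mem :> V -> Prop;
  zpred0 : zpred_mem 0;
  zpredD : forall a b, zpred_mem a -> zpred_mem b -> zpred_mem (a + b);
  zpredN : forall a, zpred_mem a -> zpred_mem (- a) }.

Arguments zpred0 {V} z.
Arguments zpredD {V z a b}.
Arguments zpredN {V z a}.

Section SubZmodule.
Variables (V : zmodType) (S : zmod_pred V).

Definition subzmod := {v : V | S v}.

Lemma sval_inj : injective (@sval V S : subzmod -> V).
Proof. by move=> [a Sa] [b Sb] /= ab; apply: eq_exist. Qed.

Definition sub_zero : subzmod := exist _ 0 (zpred0 S).
Definition sub_add (a b : subzmod) : subzmod :=
  exist _ (sval a + sval b) (zpredD (svalP a) (svalP b)).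
Definition sub_opp (a : subzmod) : subzmod := exist _ (- sval a) (zpredN (svalP a)).

Lemma sub_addA : associative sub_add.
Proof. by move=> a b c; apply: sval_inj; rewrite /= addrA. Qed.
Lemma sub_addC : commutative sub_add.
Proof. by move=> a b; apply: sval_inj; rewrite /= addrC. Qed.
Lemma sub_add0 : left_id sub_zero sub_add.
Proof. by move=> a; apply: sval_inj; rewrite /= add0r. Qed.
Lemma sub_addN : left_inverse sub_zero sub_opp sub_add.
Proof. by move=> a; apply: sval_inj; rewrite /= addNr. Qed.

End SubZmodule.

Arguments subzmod {V} S.

HB.instance Definition _ V S := gen_eqMixin (@subzmod V S).
HB.instance Definition _ V S := gen_choiceMixin (@subzmod V S).
HB.instance Definition _ V S :=
  GRing.isZmodule.Build (@subzmod V S)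
    (@sub_addA V S) (@sub_addC V S) (@sub_add0 V S) (@sub_addN V S).

Section KernelImage.
Variables (V W : zmodType) (f : V -> W).
Hypothesis fD : {morph f : a b / a + b}.

Definition zkernel : zmod_pred V.
Proof.
apply: (@ZmodPred _ (fun v => f v = 0)); first exact: morphD0.
- by move=> a b fa fb; rewrite fD fa fb addr0.
- by move=> a fa; rewrite (morphDN fD) fa oppr0.
Defined.

Definition zimage : zmod_pred W.
Proof.
apply: (@ZmodPred _ (fun w => exists v, w = f v)).
- by exists 0; rewrite (morphD0 fD).
- by move=> _ _ [a ->] [b ->]; exists (a + b); rewrite fD.
- by move=> _ [a ->]; exists (- a); rewrite (morphDN fD).
Defined.

End KernelImage.

Arguments zkernel {V W f}.
Arguments zimage {V W f}.

Lemma sval_lift {V : zmodType} {N : eqType} {S : zmod_pred V} {s : seq (V * N)} :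
  (forall p, p \in s -> S p.1) -> exists u : seq (subzmod S * N), mapl sval u = s.
Proof.
elim: s => [|[v n] s IH] Ss; first by exists [::].
have Sv : S v by apply: (Ss (v, n)); rewrite inE eqxx.
case: IH => [p ps|u us]; first by apply: Ss; rewrite inE ps orbT.
by exists ((exist _ v Sv, n) :: u); rewrite /= us.
Qed.

Section SubAction.
Variables (R : Type) (V N : zmodType) (aV : V -> R -> V) (aN : R -> N -> N)
  (S : zmod_pred V).
Hypothesis S_act : forall v r, S v -> S (aV v r).

Definition sub_act (v : subzmod S) r : subzmod S :=
  exist _ (aV (sval v) r) (S_act (sval v) r (svalP v)).

Lemma teq_sval u v : teq sub_act aN (fun _ => True) u v ->
  teq aV aN S (mapl sval u) (mapl sval v).
Proof.
elim=> {u v} /=.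
- by move=> u; apply: teq_refl.
- by move=> u v _; apply: teq_sym.
- by move=> u v w _ uv _; apply: teq_trans uv.
- by move=> u1 v1 u2 v2 _ e1 _ e2; rewrite /mapl !map_cat; apply: teq_cat.
- by move=> u v; rewrite /mapl !map_cat; apply: teq_swap.
- by move=> a b n _ _ _; apply: (teq_addl _ _ _ (svalP a) (svalP b) (svalP (a + b))).
- by move=> a n n' _; apply: teq_addr; apply: svalP.
- by move=> n _; apply: (teq_zerol _ _ _ (svalP (0 : subzmod S))).
- by move=> a _; apply: teq_zeror; apply: svalP.
- by move=> a r n _ _; apply: (teq_bal _ n (svalP a) (svalP (sub_act a r))).
Qed.

End SubAction.

Arguments teq_sval {R V N aV aN S S_act u v}.
Arguments sub_act {R V aV S} S_act v r.

Section FlatSub.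
Variables (k : comPzRingType) (B : kalg k) (V N : zmodType)
  (aV : V -> kcar B -> V) (aN : kcar B -> N -> N) (S : zmod_pred V).
Hypothesis S_act : forall v b, S v -> S (aV v b).

Lemma rmod_sub_act : rmod_over aV -> rmod_over (sub_act S_act).
Proof.
case=> aVDl aVDr aVM aV1.
by split=> *; apply: sval_inj; rewrite /= ?aVDl ?aVDr ?aVM ?aV1.
Qed.

Lemma flat_sub_teq : flat_left aN -> rmod_over aV ->
  forall u v : seq (subzmod S * N),
  teq aV aN (fun _ => True) (mapl sval u) (mapl sval v) ->
  teq (sub_act S_act) aN (fun _ => True) u v.
Proof.
move=> flatN rmodV u v.
exact: (flatN _ _ _ _ (fun w : subzmod S => sval w) (rmod_sub_act rmodV) rmodV
  (fun _ _ => erefl) (fun _ _ => erefl) (@sval_inj V S) u v).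
Qed.

End FlatSub.

Arguments flat_sub_teq {k B V N aV aN S} S_act _ _ {u v}.

Section RightExact.
Variables (R : Type) (M P N : zmodType) (aM : M -> R -> M) (aP : P -> R -> P)
  (aN : R -> N -> N) (g : M -> P).
Hypotheses (gD : {morph g : a b / a + b})
  (g_act : forall m r, g (aM m r) = aP (g m) r)
  (g_surj : forall p, exists m, g m = p).

Let pre p := projT1 (cid (g_surj p)).
Let preK p : g (pre p) = p.
Proof. by rewrite /pre; case: (cid _). Qed.

(* Lifting both sides along a section [pre] of g, each generating relation of
   P (x) N becomes an element of (ker g) (x) N. *)
Lemma teq_lift_ker u v : teq aP aN (fun _ => True) u v ->
  exists2 h, (forall p, p \in h -> g p.1 = 0) &
    ten aM aN (mapl pre u) - ten aM aN (mapl pre v) = ten aM aN h.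
Proof.
have ker1 m n : g m = 0 -> forall p, p \in [:: (m, n)] -> g p.1 = 0.
  by move=> gm p; rewrite inE => /eqP ->.
elim=> {u v}.
- by move=> u; exists [::]; rewrite ?subrr.
- move=> u v _ [h kh e]; exists (mapl -%R h).
    by move=> _ /mapP [p /kh gp ->] /=; rewrite (morphDN gD) gp oppr0.
  by rewrite ten_oppl -e opprB.
- move=> u v w _ [h kh e] _ [h' kh' e']; exists (h ++ h').
    by move=> p; rewrite mem_cat => /orP [/kh | /kh'].
  by rewrite ten_cat -e -e' addrA subrK.
- move=> u1 v1 u2 v2 _ [h kh e] _ [h' kh' e']; exists (h ++ h').
    by move=> p; rewrite mem_cat => /orP [/kh | /kh'].
  by rewrite /mapl !map_cat !ten_cat -e -e' opprD addrACA.
- move=> u v; exists [::] => //.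
  by rewrite /mapl !map_cat !ten_cat [X in _ - X]addrC subrr.
- move=> p p' n _ _ _; exists [:: (pre (p + p') - pre p - pre p', n)].
    by apply: ker1; rewrite !(morphDB gD) !preK [p + p']addrC addrK subrr.
  by rewrite /= !tenBl [ten _ _ [:: _; _]]ten_cons opprD addrA.
- move=> p n n' _; exists [::] => //.
  by rewrite /= tenDr [ten _ _ [:: _; _]]ten_cons subrr.
- move=> n _; exists [:: (pre 0, n)]; first by apply: ker1; rewrite preK.
  by rewrite /= subr0.
- by move=> p _; exists [::]; rewrite //= ten0r subrr.
- move=> p r n _ _; exists [:: (pre (aP p r) - aM (pre p) r, n)].
    by apply: ker1; rewrite (morphDB gD) g_act !preK subrr.
  by rewrite /= -ten_bal tenBl.
Qed.

(* Right exactness of - (x) N: the kernel of g (x) N is spanned by ker g (x) N. *)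
Lemma tensor_ker_lift s : teq aP aN (fun _ => True) (mapl g s) [::] ->
  exists2 h, (forall p, p \in h -> g p.1 = 0) & ten aM aN h = ten aM aN s.
Proof.
case/teq_lift_ker => h kh; rewrite subr0 => e.
pose c := [seq (pre (g p.1) - p.1, p.2) | p <- s].
exists (h ++ mapl -%R c).
  move=> p; rewrite mem_cat => /orP [/kh //|/mapP [_ /mapP [q _ ->] ->]] /=.
  by rewrite (morphDN gD) (morphDB gD) preK subrr oppr0.
rewrite ten_cat ten_oppl -e /c /mapl -map_comp !ten_sum !big_map -sumrB.
by apply: eq_bigr => -[m n] _; rewrite /= tenBl opprB addrC subrK.
Qed.

End RightExact.

Arguments tensor_ker_lift {R M P N aM aP aN g} gD g_act g_surj {s}.

Section DescentDatum.
Variables (k : comPzRingType) (X : Type) (B : X -> kalg k) (A : klincat k X).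
Variable i : forall {x : X}, kcar (B x) -> khom A x x.
Variables (M : X -> X -> lmodType k)
  (ract : forall {x y z}, M x y -> khom A y z -> M x z)
  (sigma : forall x y, M x y -> seq (M x x * khom A x y)).
Hypotheses (hi : kfunctor (@i)) (hM : rAmodule (@ract))
  (hD : descent_datum (@i) (@ract) sigma).

Local Notation ractB := (ractB (@i) (@ract)).
Local Notation lactB := (lactB (@i)).
Local Notation GM := (GM (@i) (@ract) sigma).
Local Notation epsM := (epsM (@ract)).

Lemma rmod_ractB x y : rmod_over (@ractB x y).
Proof.
case: hM => ractDl [ractDr _ _ ractA ract1]; case: (hi y) => iD _ iM i1.
by split=> *; rewrite /ractB ?ractDl ?iD ?ractDr ?iM ?ractA ?i1 ?ract1.
Qed.

Lemma epsM_teq x y P s t : teq (@ractB x x) (@lactB x y) P s t -> epsM s = epsM t.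
Proof.
case: hM => ractDl [ractDr _ _ ractA _].
by apply: teq_sum_balanced => [n m m'|m n n'|m b n]; rewrite ?ractDl ?ractDr ?ractA.
Qed.

Variable x : X.
Local Notation rB := (@ractB x x).
Local Notation lA z := (@lactB x z).
Local Notation tenA z := (ten rB (lA z)).

Lemma teq_rmul {z} (a : khom A x z) {P s t} : teq rB (lA x) P s t ->
  teq rB (lA z) P (mapr (fun q => kcomp q a) s) (mapr (fun q => kcomp q a) t).
Proof.
by apply: teq_mapr => [q q'|b q]; rewrite ?kcompDl // /lactB kcompA.
Qed.

Lemma ten_sigmaD z : {morph (fun m => tenA z (sigma x z m)) : m m' / m + m'}.
Proof.
by case: hD => sigmaD _ _ _ _ m m'; rewrite /= -ten_cat; apply/ten_eqP/sigmaD.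
Qed.

Lemma ten_sigma_ract z (m : M x x) (a : khom A x z) :
  tenA z (sigma x z (ract m a)) = tenA z (mapr (fun q => kcomp q a) (sigma x x m)).
Proof. by case: hD => _ _ sigma_ract _ _; apply/ten_eqP; apply: sigma_ract. Qed.

Definition tact (q : tensor rB (lA x)) (b : kcar (B x)) : tensor rB (lA x) :=
  tensor_mapr (fun q => kcomp q (i b)) q.

Lemma tact_ten s b : tact (tenA x s) b = tenA x (mapr (fun q => kcomp q (i b)) s).
Proof.
by apply: tensor_maprE => [q q'|b' q]; rewrite ?kcompDl // /lactB kcompA.
Qed.

Lemma tactD b : {morph tact^~ b : q q' / q + q'}.
Proof.
move=> q q'; rewrite -[q]ten_reprK -[q']ten_reprK -ten_cat !tact_ten.
by rewrite /mapr map_cat ten_cat.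
Qed.

Lemma rmod_tact : rmod_over tact.
Proof.
case: (hi x) => iD _ iM i1; split.
- by move=> q q' b; apply: tactD.
- move=> q b b'; rewrite -[q]ten_reprK !tact_ten iD.
  elim: (ten_repr q) => [|[m a] s IH]; first by rewrite -ten_cat.
  by rewrite /= ten_cons IH kcompDr tenDr addrACA -!ten_cons.
- by move=> q b b'; rewrite -[q]ten_reprK !tact_ten /mapr -map_comp iM;
    congr (ten _ _ _); apply: eq_map => -[m a] /=; rewrite kcompA.
- move=> q; rewrite -[q]ten_reprK tact_ten i1; congr (ten _ _ _).
  by elim: (ten_repr q) => [|[m a] s IH] //=; rewrite IH kcomp1r.
Qed.

Definition d (m : M x x) : tensor rB (lA x) :=
  tenA x (sigma x x m) - tenA x [:: (m, kidm A x)].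

Lemma dD : {morph d : m m' / m + m'}.
Proof. by move=> m m'; rewrite /d ten_sigmaD tenDl opprD addrACA. Qed.

Lemma d_act m b : d (rB m b) = tact (d m) b.
Proof.
rewrite /d (morphDB (tactD b)) !tact_ten /ractB ten_sigma_ract.
by rewrite -[ract m (i b)]/(rB m b) ten_bal /lactB /= kcomp1l kcomp1r.
Qed.

Lemma GM_ker_d m : GM m <-> d m = 0.
Proof.
rewrite /d; split => [/ten_eqP -> | /eqP]; first by rewrite subrr.
by rewrite subr_eq0 => /eqP /ten_eqP.
Qed.

Lemma ker_d_act m b : zkernel dD m -> zkernel dD (rB m b).
Proof. by rewrite /= d_act => ->; apply: (morphD0 (tactD b)). Qed.

Lemma im_d_act q b : zimage dD q -> zimage dD (tact q b).
Proof. by case=> m ->; exists (rB m b); rewrite d_act. Qed.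

Lemma ten_sigma_epsM {y} {s} : (forall p, p \in s -> GM p.1) ->
  tenA y (sigma x y (epsM s)) = tenA y s.
Proof.
elim: s => [|[m a] s IH] Gs; first by rewrite /epsM big_nil (morphD0 (ten_sigmaD y)).
rewrite /epsM big_cons ten_sigmaD ten_sigma_ract -/(epsM s) IH => [|p ps]; last first.
  by apply: Gs; rewrite inE ps orbT.
rewrite [RHS]ten_cons; congr (_ + _); apply/ten_eqP.
have Gm : GM m by apply: (Gs (m, a)); rewrite inE eqxx.
by apply: teq_trans (teq_rmul a Gm) _; rewrite /= kcomp1l; apply: teq_refl.
Qed.

(* Axiom (ii) says exactly that (d (x) A_xy) (sigma_xy m) = 0. *)
Lemma ten_d_sigma y (m : M x y) : ten tact (lA y) (mapl d (sigma x y m)) = 0.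
Proof.
have assoc := teq3_ten_assoc (aQr := fun a b => kcomp a (i b)) (aN := lA y)
  (fun m q b => tact_ten [:: (m, q)] b).
have sigma_sum L : ten tact (lA y)
    (ten_assoc (flatten [seq [seq (q.1, q.2, p.2) | q <- sigma x x p.1] | p <- L])) =
    \sum_(p <- L) ten tact (lA y) [:: (tenA x (sigma x x p.1), p.2)].
  elim: L => [|p L IH]; first by rewrite big_nil.
  rewrite /= /ten_assoc /mapl map_cat ten_cat -/(mapl _ _) IH big_cons; congr (_ + _).
  by rewrite -ten_assoc_pairs -map_comp; congr (ten _ _ _); apply: eq_map => -[].
have unit_sum L : ten tact (lA y) (ten_assoc [seq (p.1, kidm A x, p.2) | p <- L]) =
    \sum_(p <- L) ten tact (lA y) [:: (tenA x [:: (p.1, kidm A x)], p.2)].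
  by rewrite ten_sum /ten_assoc /mapl -map_comp big_map.
rewrite ten_sum big_map /=.
under eq_bigr do rewrite tenBl.
rewrite sumrB -sigma_sum -unit_sum; apply/eqP; rewrite subr_eq0; apply/eqP.
by apply: assoc; case: hD => _ _ _ sigma_coassoc _; apply: sigma_coassoc.
Qed.

Variable y : X.
Hypothesis flatA : flat_left (lA y).

Lemma epsM_inj (s t : seq (M x x * khom A x y)) :
  (forall p, p \in s -> GM p.1) -> (forall p, p \in t -> GM p.1) ->
  epsM s = epsM t -> teqGA (@i) (@ract) sigma s t.
Proof.
move=> Gs Gt est.
have /ten_eqP : tenA y s = tenA y t.
  by rewrite -(ten_sigma_epsM Gs) -(ten_sigma_epsM Gt) est.
have kerG (u : seq (M x x * khom A x y)) :
    (forall p, p \in u -> GM p.1) -> forall p, p \in u -> zkernel dD p.1.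
  by move=> Gu p /Gu /GM_ker_d.
have [u <-] := sval_lift (kerG s Gs); have [v <-] := sval_lift (kerG t Gt).
move/(flat_sub_teq ker_d_act flatA (rmod_ractB x x))/teq_sval.
by apply: teq_predW => m /GM_ker_d.
Qed.

Lemma epsM_surj (m : M x y) :
  exists s, (forall p, p \in s -> GM p.1) /\ epsM s = m.
Proof.
pose dP (a : M x x) : subzmod (zimage dD) := exist _ (d a) (ex_intro _ a erefl).
have dPD : {morph dP : a b / a + b} by move=> a b; apply: sval_inj; rewrite /= dD.
have dP_act a b : dP (rB a b) = sub_act im_d_act (dP a) b.
  by apply: sval_inj; rewrite /= d_act.
have dP_surj q : exists a, dP a = q.
  by case: q => q [a qa]; exists a; apply: sval_inj; rewrite /= qa.
have : teq (sub_act im_d_act) (lA y) (fun _ => True) (mapl dP (sigma x y m)) [::].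
  apply: (flat_sub_teq im_d_act flatA rmod_tact); apply/ten_eqP.
  by rewrite /mapl -map_comp ten_d_sigma.
case/(tensor_ker_lift dPD dP_act dP_surj) => h kh /ten_eqP /epsM_teq eps_h.
exists h; split=> [p /kh /(congr1 sval) /GM_ker_d //|].
by rewrite eps_h; case: hD => _ _ _ _; apply.
Qed.

End DescentDatum.

Theorem proposition2p3 (k : comPzRingType) (X : Type) (B : X -> kalg k)
  (A : klincat k X) (i : forall {x}, kcar (B x) -> khom A x x)
  (M : X -> X -> lmodType k) (ract : forall {x y z}, M x y -> khom A y z -> M x z)
  (sigma : forall x y, M x y -> seq (M x x * khom A x y)) (x y : X) :
  kfunctor (@i) ->
  rAmodule (@ract) ->
  flat_left (@lactB k X B A (@i) x y) ->
  descent_datum (@i) (@ract) sigma ->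
  (forall m : M x y, exists s : seq (M x x * khom A x y),
      (forall p, p \in s -> GM (@i) (@ract) sigma p.1) /\ epsM (@ract) s = m) /\
  (forall s t : seq (M x x * khom A x y),
      (forall p, p \in s -> GM (@i) (@ract) sigma p.1) ->
      (forall p, p \in t -> GM (@i) (@ract) sigma p.1) ->
      epsM (@ract) s = epsM (@ract) t -> teqGA (@i) (@ract) sigma s t).
Proof.
move=> hi hM flatA hD; split.
- exact: epsM_surj.
- exact: epsM_inj.
Qed.
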